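(* Fix a positive integer $s$, let $h_{s,i,j}$ be as in the context, and set $\mathcal{H}(s)=\sum_{i\ge 0}\sum_{j\ge i+1}h_{s,i,j}x^jz^i$. Then $$\mathcal{H}(s)=-\frac{(1-xz)^s}{1-z}-\frac{x(1-xz)^{2s}}{(1-x)^{s+1}}+\frac{(1-xz)^{2s}}{(1-x)^s(1-z)}.$$
   Context: For a fixed positive integer $s$, the numbers $h_{s,i,j}$ (integers $i\ge 0$, $j$) are defined recursively by: $h_{s,i,j}=0$ if $j\le i$; for $i=0$ and $j\ge 1$, $h_{s,0,j}=\binom{s+j-1}{j}\frac{s-j}{s}$; for $i>0$ and $j>i$, $h_{s,i,j}=-\frac{s-j+1}{i}h_{s,i-1,j-1}-\frac{j-i}{i}h_{s,i-1,j}$. The identity is of formal power series in $x,z$. *)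

From HB Require Import structures.
From mathcomp Require Import all_boot all_order all_algebra.
Set Implicit Arguments. Unset Strict Implicit. Unset Printing Implicit Defensive.
Import Order.TTheory GRing.Theory Num.Theory.
Local Open Scope ring_scope.

Fixpoint hcoef (s i j : nat) : rat :=
  match i with
  | 0 => if (j <= 0)%N then 0
         else ('C(s + j - 1, j))%:R * ((s%:R - j%:R) / s%:R)
  | i'.+1 => if (j <= i)%N then 0
             else - ((s%:R - j%:R + 1) / i%:R) * hcoef s i' j.-1
                  - ((j%:R - i%:R) / i%:R) * hcoef s i' j
  end.

(* Formal power series in two variables x, z over rat:
   f j i is the coefficient of x^j z^i. *)
Definition fps := nat -> nat -> rat.

Definition fps_add (f g : fps) : fps := fun j i => f j i + g j i.
Definition fps_opp (f : fps) : fps := fun j i => - f j i.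
Definition fps_mul (f g : fps) : fps := fun j i =>
  \sum_(a < j.+1) \sum_(b < i.+1) f a b * g (j - a)%N (i - b)%N.
Definition fps_one : fps := fun j i => if (j == 0%N) && (i == 0%N) then 1 else 0.
Definition fps_x : fps := fun j i => if (j == 1%N) && (i == 0%N) then 1 else 0.
Definition fps_z : fps := fun j i => if (j == 0%N) && (i == 1%N) then 1 else 0.
Definition fps_exp (f : fps) (n : nat) : fps := iterop n fps_mul f fps_one.

Declare Scope fps_scope.
Delimit Scope fps_scope with fps.
Notation "f + g" := (fps_add f g) : fps_scope.
Notation "f - g" := (fps_add f (fps_opp g)) : fps_scope.
Notation "- f" := (fps_opp f) : fps_scope.
Notation "f * g" := (fps_mul f g) : fps_scope.
Notation "f ^+ n" := (fps_exp f n) : fps_scope.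
Notation "1" := fps_one : fps_scope.
Notation "'x" := fps_x : fps_scope.
Notation "'z" := fps_z : fps_scope.

(* H(s) = sum_{i>=0} sum_{j>=i+1} h_{s,i,j} x^j z^i ; h vanishes for j <= i. *)
Definition Hser (s : nat) : fps := fun j i => hcoef s i j.

From HB Require Import structures.
From mathcomp Require Import all_boot all_order all_algebra.
From mathcomp Require Import boolp ring.
Set Implicit Arguments. Unset Strict Implicit. Unset Printing Implicit Defensive.
Import Order.TTheory GRing.Theory Num.Theory.
Local Open Scope ring_scope.

(* The operator delta = (1 - z) z d/dz + z (1 - x) x d/dx is a derivation of Q[[x,z]]
   for which x, z, 1 - xz, 1/(1 - x) and 1/(1 - z) are eigenvectors with polynomial
   eigenvalues, so each of the three summands G of the right-hand side satisfies
   delta G = z (1 - s x) G.  The recursion defining h_{s,i,j} says precisely that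
   H(s) satisfies the same first-order equation, in which the coefficient of
   x^j z^(i+1) occurs with the invertible factor i + 1 next to coefficients of z^i
   only; hence a solution is determined by its z^0 row.
   The two z^0 rows agree because 1/(1 - x)^n has coefficients C(n + j - 1, j). *)

Section Series.
Variable R : comNzRingType.

Definition ser := nat -> R.
HB.instance Definition _ := Choice.copy ser (nat -> R).

Definition ser_add (f g : ser) : ser := fun n => f n + g n.
Definition ser_opp (f : ser) : ser := fun n => - f n.
Definition ser_zero : ser := fun _ => 0.

Lemma ser_addA : associative ser_add.
Proof. by move=> f g h; apply: funext => n; rewrite /ser_add addrA. Qed.
Lemma ser_addC : commutative ser_add.
Proof. by move=> f g; apply: funext => n; rewrite /ser_add addrC. Qed.
Lemma ser_add0 : left_id ser_zero ser_add.
Proof. by move=> f; apply: funext => n; rewrite /ser_add add0r. Qed.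
Lemma ser_addN : left_inverse ser_zero ser_opp ser_add.
Proof. by move=> f; apply: funext => n; rewrite /ser_add addNr. Qed.
HB.instance Definition _ :=
  GRing.isZmodule.Build ser ser_addA ser_addC ser_add0 ser_addN.

Definition ser_mul (f g : ser) : ser := fun n => \sum_(a < n.+1) f a * g (n - a)%N.
Definition ser_one : ser := fun n => (n == 0)%:R.

Lemma ser_mul_rev f g n : ser_mul f g n = \sum_(a < n.+1) f (n - a)%N * g a.
Proof.
rewrite /ser_mul (reindex_inj rev_ord_inj) /=.
by apply: eq_bigr => a _; rewrite (sub_ordK a).
Qed.

Lemma ser_mulA : associative ser_mul.
Proof.
move=> f g h; apply: funext => n; rewrite [LHS]/ser_mul [RHS]ser_mul_rev.
pose c a b := f a * (g (n - a - b)%N * h b).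
transitivity (\sum_(a < n.+1) \sum_(b < n.+1 | (b <= n - a)%N) c a b).
  apply: eq_bigr => a _; rewrite ser_mul_rev big_distrr /=.
  by rewrite (big_ord_narrow_leq (leq_subr _ _)).
rewrite (exchange_big_dep predT) //=; apply: eq_bigr => b _.
transitivity (\sum_(a < n.+1 | (a <= n - b)%N) c a b).
  apply: eq_bigl => a; rewrite -ltnS -(ltnS a) -!subSn ?leq_ord //.
  by rewrite -subn_gt0 -(subn_gt0 a) -!subnDA addnC.
rewrite (big_ord_narrow_leq (leq_subr _ _)) big_distrl /=.
by apply: eq_bigr => a _; rewrite /c -!subnDA addnC mulrA.
Qed.

Lemma ser_mulC : commutative ser_mul.
Proof.
move=> f g; apply: funext => n; rewrite ser_mul_rev.
by apply: eq_bigr => a _; rewrite mulrC.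
Qed.

Lemma ser_mul1 : left_id ser_one ser_mul.
Proof.
move=> f; apply: funext => n; rewrite /ser_mul big_ord_recl mul1r subn0.
by rewrite big1 ?addr0 // => a _; rewrite mul0r.
Qed.

Lemma ser_mulDl : left_distributive ser_mul ser_add.
Proof.
move=> f g h; apply: funext => n; rewrite /ser_mul /ser_add -big_split.
by apply: eq_bigr => a _; rewrite mulrDl.
Qed.

Lemma ser_one_neq0 : ser_one != 0.
Proof. by apply/eqP => /(congr1 (fun f : ser => f 0%N))/eqP; rewrite oner_eq0. Qed.

HB.instance Definition _ := GRing.Zmodule_isComNzRing.Build ser
  ser_mulA ser_mulC ser_mul1 ser_mulDl ser_one_neq0.

Lemma ser_ext (f g : ser) : f =1 g -> f = g.
Proof. exact: funext. Qed.

Lemma scoefD (f g : ser) n : (f + g) n = f n + g n. Proof. by []. Qed.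
Lemma scoefN (f : ser) n : (- f) n = - f n. Proof. by []. Qed.
Lemma scoefB (f g : ser) n : (f - g) n = f n - g n. Proof. by []. Qed.
Lemma scoef0 n : (0 : ser) n = 0. Proof. by []. Qed.
Lemma scoef1 n : (1 : ser) n = (n == 0)%:R. Proof. by []. Qed.
Lemma scoefM (f g : ser) n : (f * g) n = \sum_(a < n.+1) f a * g (n - a)%N.
Proof. by []. Qed.

Lemma scoef_sum I (r : seq I) (P : pred I) (F : I -> ser) n :
  (\sum_(i <- r | P i) F i) n = \sum_(i <- r | P i) F i n.
Proof. by elim/big_rec2: _ => // i a f _ <-. Qed.

Lemma scoefMn (f : ser) k n : (f *+ k) n = f n *+ k.
Proof. by elim: k => [|k IHk]; rewrite ?mulr0n // !mulrS scoefD IHk. Qed.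

Definition serC (c : R) : ser := fun n => if n is 0 then c else 0.
Definition serX : ser := fun n => (n == 1)%:R.

Lemma scoefCM c (f : ser) n : (serC c * f) n = c * f n.
Proof.
rewrite scoefM big_ord_recl subn0 big1 ?addr0 // => a _.
by rewrite mul0r.
Qed.

Lemma scoefMn_l k (f : ser) n : (k%:R * f) n = k%:R * f n.
Proof. by rewrite mulr_natl scoefMn mulr_natl. Qed.

Lemma scoefXM (f : ser) n : (serX * f) n = if n is m.+1 then f m else 0.
Proof.
case: n => [|n]; first by rewrite scoefM big_ord1 mul0r.
rewrite scoefM big_ord_recl mul0r add0r big_ord_recl /= subn1 mul1r.
by rewrite big1 ?addr0 // => a _; rewrite mul0r.
Qed.

Definition ser_euler (f : ser) : ser := fun n => n%:R * f n.

Lemma ser_euler_is_zmod_morphism : zmod_morphism ser_euler.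
Proof. by move=> f g; apply: ser_ext => n; rewrite /ser_euler !scoefB mulrBr. Qed.
HB.instance Definition _ :=
  GRing.isZmodMorphism.Build ser ser ser_euler ser_euler_is_zmod_morphism.

Lemma ser_eulerM (f g : ser) :
  ser_euler (f * g) = ser_euler f * g + f * ser_euler g.
Proof.
apply: ser_ext => n; rewrite scoefD /ser_euler !scoefM mulr_sumr -big_split /=.
apply: eq_bigr => a _; have ha : (a <= n)%N by rewrite -ltnS.
by rewrite -{1}(subnKC ha) natrD; ring.
Qed.

Lemma ser_eulerC c : ser_euler (serC c) = 0.
Proof. by apply: ser_ext => -[|n]; rewrite /ser_euler /= ?mul0r ?mulr0. Qed.

Lemma ser_eulerX : ser_euler serX = serX.
Proof. by apply: ser_ext => -[|[|n]]; rewrite /ser_euler /= ?mul0r ?mulr0 ?mul1r. Qed.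

Definition ser_coef0 (f : ser) : R := f 0%N.

Lemma ser_coef0_is_zmod_morphism : zmod_morphism ser_coef0. Proof. by []. Qed.
Lemma ser_coef0_is_monoid_morphism : monoid_morphism ser_coef0.
Proof. by split=> // f g; rewrite /ser_coef0 scoefM big_ord1. Qed.
HB.instance Definition _ :=
  GRing.isZmodMorphism.Build ser R ser_coef0 ser_coef0_is_zmod_morphism.
HB.instance Definition _ :=
  GRing.isMonoidMorphism.Build ser R ser_coef0 ser_coef0_is_monoid_morphism.

End Series.

Arguments serX {R}.

Definition ser_map (R S : comNzRingType) (phi : R -> S) (f : ser R) : ser S :=
  fun n => phi (f n).

Section SerMap.
Variables R S : comNzRingType.

Section Additive.
Variable phi : {additive R -> S}.

Lemma ser_map_is_zmod_morphism : zmod_morphism (ser_map phi).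
Proof. by move=> f g; apply: ser_ext => n; rewrite /ser_map raddfB. Qed.
HB.instance Definition _ := GRing.isZmodMorphism.Build (ser R) (ser S)
  (ser_map phi) ser_map_is_zmod_morphism.

Lemma ser_mapC c : ser_map phi (serC c) = serC (phi c).
Proof. by apply: ser_ext => -[|n]; rewrite /ser_map /= ?raddf0. Qed.

End Additive.

Variable phi : {rmorphism R -> S}.

Lemma ser_map_is_monoid_morphism : monoid_morphism (ser_map phi).
Proof.
split; first by apply: ser_ext => n; rewrite /ser_map !scoef1 rmorph_nat.
move=> f g; apply: ser_ext => n; rewrite /ser_map !scoefM rmorph_sum.
by apply: eq_bigr => a _; rewrite rmorphM.
Qed.
HB.instance Definition _ := GRing.isMonoidMorphism.Build (ser R) (ser S)
  (ser_map phi) ser_map_is_monoid_morphism.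

End SerMap.

Section Derivation.
Variables (R : comNzRingType) (d : {additive R -> R}).
Hypothesis dM : forall a b, d (a * b) = d a * b + a * d b.

Lemma derivation1 : d 1 = 0.
Proof.
have d11 : d 1 + d 1 = d 1 + 0 by rewrite addr0 -{3}(mulr1 1) dM mulr1 mul1r.
exact: addrI d11.
Qed.

Lemma derivation_nat k : d k%:R = 0.
Proof. by rewrite raddfMn derivation1 mul0rn. Qed.

Lemma derivation_eigenM e e' f g :
  d f = e * f -> d g = e' * g -> d (f * g) = (e + e') * (f * g).
Proof. by move=> df dg; rewrite dM df dg; ring. Qed.

Lemma derivation_eigenXn e f n : d f = e * f -> d (f ^+ n) = n%:R * e * f ^+ n.
Proof.
move=> df; elim: n => [|n IHn]; first by rewrite expr0 derivation1 !mul0r.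
by rewrite exprS (derivation_eigenM df IHn) -natr1; ring.
Qed.

Lemma derivation_inv f g : f * g = 1 -> d g = - d f * g ^+ 2.
Proof.
move=> fg; have : d f * g + f * d g = 0 by rewrite -dM fg derivation1.
move=> /eqP; rewrite addrC addr_eq0 => /eqP fdg.
by rewrite -[d g]mul1r -fg (mulrC f) -mulrA fdg; ring.
Qed.

Lemma ser_map_derivationM (f g : ser R) :
  ser_map d (f * g) = ser_map d f * g + f * ser_map d g.
Proof.
apply: ser_ext => n; rewrite scoefD /ser_map !scoefM raddf_sum -big_split /=.
by apply: eq_bigr => a _; rewrite dM.
Qed.

End Derivation.

Section InverseOneMinusX.
Variable R : comNzRingType.

Lemma coef_div1X (V W : ser R) j :
  (1 - serX) * W = V -> W j = V j + (if j is k.+1 then W k else 0).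
Proof. by move=> <-; rewrite mulrBl mul1r scoefB scoefXM subrK. Qed.

Lemma coef_inv1X_exp (Y : ser R) n j :
  (1 - serX) * Y = 1 -> (Y ^+ n.+1) j = 'C(n + j, j)%:R.
Proof.
move=> hY; elim: n j => [|n IHn] j.
  rewrite expr1; elim: j => [|j IHj].
    by rewrite (coef_div1X _ hY) scoef1 addr0.
  by rewrite (coef_div1X _ hY) IHj scoef1 add0r !binn.
have hYn : (1 - serX) * Y ^+ n.+2 = Y ^+ n.+1 by rewrite exprS mulrA hY mul1r.
elim: j => [|j IHj]; rewrite (coef_div1X _ hYn) IHn.
  by rewrite addr0 !addn0 !bin0.
by rewrite IHj -natrD !addSn !addnS [in RHS]binS.
Qed.

End InverseOneMinusX.

(* [F j i] is the coefficient of x^j z^i, as for [fps], to which [Qxz] is convertible. *)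
Notation Qxz := (ser (ser rat)).
Notation eulerx := (@ser_euler (ser rat)).
Notation eulerz := (ser_map (@ser_euler rat)).

Definition varx : Qxz := serX.
Definition varz : Qxz := serC serX.

Definition delta (F : Qxz) : Qxz :=
  (1 - varz) * eulerz F + varz * (1 - varx) * eulerx F.

Lemma delta_is_zmod_morphism : zmod_morphism delta.
Proof. by move=> F G; rewrite /delta !raddfB; ring. Qed.
HB.instance Definition _ :=
  GRing.isZmodMorphism.Build Qxz Qxz delta delta_is_zmod_morphism.

Lemma deltaM (F G : Qxz) : delta (F * G) = delta F * G + F * delta G.
Proof. by rewrite /delta ser_eulerM (ser_map_derivationM (@ser_eulerM rat)); ring. Qed.

Lemma eulerz_varx : eulerz varx = 0.
Proof. by apply: ser_ext => j; rewrite /ser_map (derivation_nat (@ser_eulerM rat)). Qed.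

Lemma eulerz_varz : eulerz varz = varz.
Proof. by rewrite ser_mapC /= ser_eulerX. Qed.

Lemma delta_varx : delta varx = varz * (1 - varx) * varx.
Proof. by rewrite /delta eulerz_varx ser_eulerX mulr0 add0r. Qed.

Lemma delta_varz : delta varz = (1 - varz) * varz.
Proof. by rewrite /delta eulerz_varz ser_eulerC mulr0 addr0. Qed.

Lemma delta_1xz : delta (1 - varx * varz) = - (varx * varz) * (1 - varx * varz).
Proof.
by rewrite raddfB (derivation1 deltaM) /= deltaM delta_varx delta_varz; ring.
Qed.

Definition hpde_weight (s : nat) : Qxz := varz * (1 - s%:R * varx).

Section ClosedForm.
Variables (X Z : Qxz).
Hypothesis hX : (1 - varx) * X = 1.
Hypothesis hZ : (1 - varz) * Z = 1.

Lemma delta_inv1x : delta X = varz * varx * X.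
Proof.
rewrite (derivation_inv deltaM hX) raddfB (derivation1 deltaM) /= delta_varx.
by transitivity (varz * varx * X * ((1 - varx) * X)); [ring | rewrite hX mulr1].
Qed.

Lemma delta_inv1z : delta Z = varz * Z.
Proof.
rewrite (derivation_inv deltaM hZ) raddfB (derivation1 deltaM) /= delta_varz.
by transitivity (varz * Z * ((1 - varz) * Z)); [ring | rewrite hZ mulr1].
Qed.

Definition hclosed (s : nat) : Qxz :=
  - ((1 - varx * varz) ^+ s * Z)
  - varx * (1 - varx * varz) ^+ (2 * s) * X ^+ s.+1
  + (1 - varx * varz) ^+ (2 * s) * X ^+ s * Z.

Lemma delta_hclosed s : delta (hclosed s) = hpde_weight s * hclosed s.
Proof.
set u := 1 - varx * varz.
have du n := derivation_eigenXn deltaM n delta_1xz.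
have dX n := derivation_eigenXn deltaM n delta_inv1x.
have d1 : delta (u ^+ s * Z) = hpde_weight s * (u ^+ s * Z).
  rewrite (derivation_eigenM deltaM (du s) delta_inv1z) /hpde_weight.
  by congr (_ * _); ring.
have d2 : delta (varx * u ^+ (2 * s) * X ^+ s.+1)
          = hpde_weight s * (varx * u ^+ (2 * s) * X ^+ s.+1).
  rewrite (derivation_eigenM deltaM (derivation_eigenM deltaM delta_varx (du _)) (dX _)).
  by rewrite /hpde_weight natrM -natr1; congr (_ * _); ring.
have d3 : delta (u ^+ (2 * s) * X ^+ s * Z) = hpde_weight s * (u ^+ (2 * s) * X ^+ s * Z).
  rewrite (derivation_eigenM deltaM (derivation_eigenM deltaM (du _) (dX _)) delta_inv1z).
  by rewrite /hpde_weight natrM; congr (_ * _); ring.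
by rewrite /hclosed !raddfD !raddfN /= d1 d2 d3; ring.
Qed.

End ClosedForm.

Definition hpde (s : nat) (F : Qxz) : Qxz := delta F - hpde_weight s * F.

Lemma hpdeB s (F G : Qxz) : hpde s (F - G) = hpde s F - hpde s G.
Proof. by rewrite /hpde raddfB; ring. Qed.

Lemma coef_varxM (F : Qxz) j i :
  (varx * F) j i = if j is k.+1 then F k i else 0.
Proof. by rewrite scoefXM; case: j. Qed.

Lemma coef_varzM (F : Qxz) j i :
  (varz * F) j i = if i is k.+1 then F j k else 0.
Proof. by rewrite scoefCM scoefXM. Qed.

Lemma coef_natM k (F : Qxz) j i : (k%:R * F) j i = k%:R * F j i.
Proof. by rewrite !scoefMn_l. Qed.

Lemma coef_eulerx (F : Qxz) j i : eulerx F j i = j%:R * F j i.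
Proof. exact: scoefMn_l. Qed.

Lemma hpdeE s (F : Qxz) : hpde s F =
  eulerz F - varz * (eulerz F - eulerx F + varx * eulerx F + F - s%:R * (varx * F)).
Proof. by rewrite /hpde /delta /hpde_weight; ring. Qed.

Lemma hpde_coef0 s (F : Qxz) j : hpde s F j 0%N = 0.
Proof. by rewrite hpdeE !scoefB coef_varzM /ser_map /ser_euler mul0r subr0. Qed.

Lemma hpde_coefS s (F : Qxz) j i :
  hpde s F j i.+1 = i.+1%:R * F j i.+1 + (j%:R - i%:R - 1) * F j i
                   + (if j is k.+1 then (s%:R - k%:R) * F k i else 0).
Proof.
rewrite hpdeE !scoefB coef_varzM !scoefB !scoefD !scoefN coef_natM !coef_varxM.
case: j => [|k]; rewrite !coef_eulerx /ser_map /ser_euler; first by ring.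
by rewrite -natr1; ring.
Qed.

Lemma hpde_eq0_row0 s (F : Qxz) : hpde s F = 0 -> (forall j, F j 0%N = 0) -> F = 0.
Proof.
move=> hF F0; apply: ser_ext => j; apply: ser_ext => i; rewrite !scoef0.
elim: i j => [|i IHi] j; first exact: F0.
have i1_neq0 : i.+1%:R != 0 :> rat by rewrite pnatr_eq0.
have := hpde_coefS s F j i; rewrite hF scoef0.
case: j => [|k]; rewrite !IHi !mulr0 !addr0 => /esym/eqP;
  by rewrite mulf_eq0 (negbTE i1_neq0) => /eqP.
Qed.

Lemma hpde_uniq s (F G : Qxz) :
  hpde s F = 0 -> hpde s G = 0 -> (forall j, F j 0%N = G j 0%N) -> F = G.
Proof.
move=> hF hG FG0; apply/eqP; rewrite -subr_eq0; apply/eqP.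
by apply: (hpde_eq0_row0 (s := s)) => [|j]; rewrite ?hpdeB ?hF ?hG ?subrr // !scoefB FG0 subrr.
Qed.

Lemma hcoef_eq0 s i j : (j <= i)%N -> hcoef s i j = 0.
Proof. by case: i => [|i] /= ->. Qed.

Lemma hcoef_rec s i j :
  i.+1%:R * hcoef s i.+1 j + (j%:R - i%:R - 1) * hcoef s i j
  + (if j is k.+1 then (s%:R - k%:R) * hcoef s i k else 0) = 0.
Proof.
case: (ltnP i.+1 j) => [|hj].
  case: j => [//|k] hik; rewrite [hcoef s i.+1 _]/= leqNgt hik /=.
  have i1_neq0 : i%:R + 1 != 0 :> rat by rewrite natr1 pnatr_eq0.
  by rewrite -!natr1; field.
rewrite hcoef_eq0 // mulr0 add0r.
case: (ltnP i j) => [hij | hji].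
  have -> : j = i.+1 by apply/eqP; rewrite eqn_leq hj hij.
  have -> : i.+1%:R - i%:R - 1 = 0 :> rat by rewrite -natr1; ring.
  by rewrite /= (@hcoef_eq0 s i i) // mul0r mulr0 addr0.
rewrite hcoef_eq0 // mulr0 add0r.
by case: j {hj} hji => [//|k] hki; rewrite hcoef_eq0 ?mulr0 // ltnW.
Qed.

Lemma hpde_Hser s : hpde s (Hser s) = 0.
Proof.
apply: ser_ext => j; apply: ser_ext => -[|i]; first exact: hpde_coef0.
by rewrite hpde_coefS; apply: hcoef_rec.
Qed.

Notation row0 := (ser_map (@ser_coef0 rat)).

Lemma row0_varx : row0 varx = serX.
Proof. by apply: ser_ext => j; rewrite /ser_map /varx rmorph_nat. Qed.

Lemma row0_varz : row0 varz = 0.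
Proof. by rewrite ser_mapC; apply: ser_ext => -[|j]. Qed.

Lemma hclosed_row0 s (X Z : Qxz) j : (0 < s)%N ->
  (1 - varx) * X = 1 -> (1 - varz) * Z = 1 -> hclosed X Z s j 0%N = hcoef s 0 j.
Proof.
case: s => [//|t] _ hX hZ.
have hZ0 : row0 Z = 1.
  by have := congr1 row0 hZ; rewrite rmorphM rmorphB !rmorph1 /= row0_varz subr0 mul1r.
have hX0 : (1 - serX) * row0 X = 1.
  by have := congr1 row0 hX; rewrite rmorphM rmorphB !rmorph1 /= row0_varx.
change (row0 (hclosed X Z t.+1) j = hcoef t.+1 0 j).
rewrite /hclosed !(rmorphD, rmorphN, rmorphM, rmorphXn, rmorphB, rmorph1) /= -exprS.
rewrite row0_varx row0_varz hZ0 mulr0 subr0 !expr1n !mul1r !mulr1.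
rewrite !scoefD !scoefN scoefXM !(coef_inv1X_exp _ _ hX0) scoef1.
case: j => [|k]; first by rewrite /= bin0 addr0 subrr.
rewrite (coef_inv1X_exp _ _ hX0) add0r.
have -> : (t + k.+1 = t.+1 + k)%N by rewrite addnS.
have -> : (t.+1 + k.+1 - 1 = t.+1 + k)%N by rewrite addnS subn1.
have t1_neq0 : t%:R + 1 != 0 :> rat by rewrite natr1 pnatr_eq0.
have hbin : 'C(t.+1 + k, k)%:R = k.+1%:R * 'C(t.+1 + k, k.+1)%:R / t.+1%:R :> rat.
  by rewrite -natrM mul_bin_left addnK natrM -natr1; field.
by rewrite hbin /= -!natr1; field.
Qed.

Lemma fps_addE (f g : fps) : fps_add f g = (f : Qxz) + g. Proof. by []. Qed.
Lemma fps_oppE (f : fps) : fps_opp f = - (f : Qxz). Proof. by []. Qed.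

Lemma fps_mulE (f g : fps) : fps_mul f g = (f : Qxz) * g.
Proof.
apply: funext => j; apply: funext => i.
by rewrite scoefM scoef_sum; apply: eq_bigr => a _; rewrite scoefM.
Qed.

Lemma fps_oneE : fps_one = 1 :> Qxz.
Proof. by apply: funext => j; apply: funext => i; rewrite /fps_one; case: j; case: i. Qed.

Lemma fps_xE : fps_x = varx.
Proof. by apply: funext => j; apply: funext => i; rewrite /fps_x; case: j => [|[|j]]; case: i. Qed.

Lemma fps_zE : fps_z = varz.
Proof. by apply: funext => -[|j]; apply: funext => -[|[|i]]. Qed.

Lemma fps_expE (f : fps) n : fps_exp f n = (f : Qxz) ^+ n.
Proof.
case: n => [|n]; first exact: fps_oneE.
rewrite /fps_exp iteropS; elim: n => [|n IHn]; first by rewrite expr1.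
by rewrite iterS IHn fps_mulE -exprS.
Qed.

Definition fpsE := (fps_expE, fps_mulE, fps_addE, fps_oppE, fps_oneE, fps_xE, fps_zE).

Local Open Scope fps_scope.

Theorem proposition14 (s : nat) (invz invx : fps) :
  (0 < s)%N ->
  (1 - 'z) * invz = 1 ->
  (1 - 'x) * invx = 1 ->
  Hser s =
    - ((1 - 'x * 'z) ^+ s * invz)
    - 'x * (1 - 'x * 'z) ^+ (2 * s) * invx ^+ s.+1
    + (1 - 'x * 'z) ^+ (2 * s) * invx ^+ s * invz.
Proof.
move=> s_gt0 hZ hX; rewrite !fpsE in hZ hX *.
change (Hser s = hclosed invx invz s :> Qxz).
apply: (hpde_uniq (s := s)); first exact: hpde_Hser.
  by rewrite /hpde (delta_hclosed hX hZ) subrr.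
by move=> j; rewrite (hclosed_row0 _ s_gt0 hX hZ).
Qed.
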